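(* Let $G=(V,E)$ be a finite simple graph on $n$ vertices. Let $\mathcal{A}$ be the set of all graphs $G''$ with vertex set $V$ that can be obtained as follows: for each vertex $v\in V$, if $v$ is not isolated, choose two distinct vertices of the closed neighborhood $N(v)\cup\{v\}$ and put the edge between them into $G''$; if $v$ is isolated, put a loop on $v$ into $G''$ (an edge already present is not duplicated). Let $G''_{\min}\in\mathcal{A}$ minimize $n-\alpha(G'')$ over $G''\in\mathcal{A}$. Then $$\gamma(G)=n-\alpha(G''_{\min})=\beta(G''_{\min}).$$
   Context: $N(v)$ denotes the set of neighbors of $v$ in $G$. A set $S\subseteq V$ is a dominating set of $G$ if every vertex of $V$ is in $S$ or has a neighbor in $S$; $\gamma(G)$ is the minimum size of a dominating set. For a graph $H$ possibly with loops, an independent set is a set of vertices containing no two endpoints of an edge and no vertex carrying a loop, and $\alpha(H)$ is the maximum size of an independent set; a vertex cover is a set of vertices meeting every edge (so it contains every vertex carrying a loop), and $\beta(H)$ is the minimum size of a vertex cover. *)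

From mathcomp Require Import all_boot.
Set Implicit Arguments. Unset Strict Implicit. Unset Printing Implicit Defensive.

Section Defs.
Variable V : finType.

Definition simple_graph (e : rel V) : Prop := symmetric e /\ irreflexive e.

Definition nbhd (e : rel V) (v : V) : {set V} := [set u | e v u].
Definition closed_nbhd (e : rel V) (v : V) : {set V} := v |: nbhd e v.
Definition isolated (e : rel V) (v : V) : bool := nbhd e v == set0.

Definition dominating (e : rel V) (S : {set V}) : bool :=
  [forall v, (v \in S) || [exists u in S, e v u]].

(* gamma(G): minimum size of a dominating set (V itself is dominating). *)
Definition domination_number (e : rel V) : nat :=
  \big[minn/#|V|]_(S : {set V} | dominating e S) #|S|.

(* A graph with loops on V is given by its edge set: each edge is a
   subset of V of size 2 (ordinary edge) or of size 1 (a loop). *)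
Definition independent (E : {set {set V}}) (S : {set V}) : bool :=
  [forall x in E, ~~ (x \subset S)].
Definition vertex_cover (E : {set {set V}}) (C : {set V}) : bool :=
  [forall x in E, [exists v in x, v \in C]].

Definition alpha (E : {set {set V}}) : nat :=
  \max_(S : {set V} | independent E S) #|S|.
Definition beta (E : {set {set V}}) : nat :=
  \big[minn/#|V|]_(C : {set V} | vertex_cover E C) #|C|.

Definition valid_choice (e : rel V) (f : V -> {set V}) : Prop :=
  forall v, if isolated e v then f v = [set v]
            else f v \subset closed_nbhd e v /\ #|f v| = 2.

Definition in_A (e : rel V) (E : {set {set V}}) : Prop :=
  exists f, valid_choice e f /\ E = [set f v | v : V].

End Defs.

From HB Require Import structures.
From mathcomp Require Import all_boot.

Set Implicit Arguments.
Unset Strict Implicit.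
Unset Printing Implicit Defensive.

(* Complements of independent sets are exactly vertex covers, so
   n - alpha = beta for every graph with loops.  A vertex cover of a graph of A
   dominates G, since the edge chosen for v lies in N[v]; conversely a
   dominating set D covers the graph of A obtained by pairing every
   non-isolated v with a neighbour, chosen in D when v is not (an isolated v
   lies in D and carries a loop).  Hence gamma is the minimum of beta over A,
   which is attained by G''_min. *)

(* [minn] has no unit in [nat], but as a commutative semigroup law it still
   gets [bigD1] and [reindex_inj] for [\big[minn/d]] with an arbitrary [d]. *)
HB.instance Definition _ := SemiGroup.isComLaw.Build nat minn minnA minnC.

Lemma subn_maxr m n p : m - maxn n p = minn (m - n) (m - p).
Proof.
case: (leqP n p) => [le_np | /ltnW le_pn].
  by rewrite (minn_idPr (leq_sub2l m le_np)).
by rewrite (minn_idPl (leq_sub2l m le_pn)).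
Qed.

Section BigMin.
Variables (I : finType) (P : pred I) (F : I -> nat) (d : nat).

Lemma geq_bigmin_cond i0 : P i0 -> \big[minn/d]_(i | P i) F i <= F i0.
Proof. by move=> Pi0; rewrite (bigD1 i0) // geq_minl. Qed.

Lemma geq_bigmin_idx : \big[minn/d]_(i | P i) F i <= d.
Proof. by elim/big_rec: _ => // i m _ le_md; rewrite geq_min le_md orbT. Qed.

Lemma leq_bigmin m :
  m <= d -> (forall i, P i -> m <= F i) -> m <= \big[minn/d]_(i | P i) F i.
Proof.
move=> le_md le_mF; apply: (big_ind (leq m)) => // a b le_ma le_mb.
by rewrite leq_min le_ma le_mb.
Qed.

Lemma bigmin_eq_arg i0 : P i0 -> F i0 <= d ->
  \big[minn/d]_(i | P i) F i = F [arg min_(i < i0 | P i) F i].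
Proof.
move=> Pi0 le_Fi0_d; case: arg_minnP => // i Pi minFi.
apply/eqP; rewrite eqn_leq geq_bigmin_cond //= leq_bigmin //.
exact: leq_trans (minFi i0 Pi0) le_Fi0_d.
Qed.

End BigMin.

Lemma sub_bigmin (I : finType) (P Q : pred I) (F : I -> nat) d :
    (forall i, Q i -> P i) ->
  \big[minn/d]_(i | P i) F i <= \big[minn/d]_(i | Q i) F i.
Proof.
move=> QP; apply: leq_bigmin => [|i /QP Pi]; first exact: geq_bigmin_idx.
exact: geq_bigmin_cond.
Qed.

Section Hypergraph.
Variables (V : finType) (E : {set {set V}}).

Lemma vertex_coverC S : vertex_cover E (~: S) = independent E S.
Proof.
apply: eq_forallb_in => x _.
apply/existsP/subsetPn => [[v /andP [vx]] | [v vx vS]].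
  by rewrite in_setC; exists v.
by exists v; rewrite vx in_setC.
Qed.

Lemma beta_alpha : beta E = #|V| - alpha E.
Proof.
rewrite /alpha (big_morph (subn #|V|) (subn_maxr #|V|) (subn0 #|V|)).
rewrite /beta (reindex_inj (@setC_inj V)).
by apply: eq_big => [S | S _]; rewrite ?vertex_coverC // cardsCs setCK.
Qed.

End Hypergraph.

Section Domination.
Variables (V : finType) (e : rel V).

Lemma vertex_cover_in_A_dominating E C :
  in_A e E -> vertex_cover E C -> dominating e C.
Proof.
case=> f [valid_f ->] /forall_inP cover_C; apply/forallP => v.
have /existsP [w /andP [wfv wC]] := cover_C _ (imset_f f (isT : v \in V)).
have := valid_f v; case: ifP => _.
- by move=> fv; move: wfv; rewrite fv in_set1 => /eqP <-; rewrite wC.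
- case=> fv_sub _; move: wfv => /(subsetP fv_sub).
  rewrite !inE => /predU1P [<- | evw]; first by rewrite wC.
  by apply/orP; right; apply/existsP; exists w; rewrite wC.
Qed.

Lemma domination_number_le_beta E : in_A e E -> domination_number e <= beta E.
Proof.
by move=> AE; apply: sub_bigmin => C; exact: vertex_cover_in_A_dominating.
Qed.

Lemma domination_number_attained :
  exists2 D, dominating e D & domination_number e = #|D|.
Proof.
have domT : dominating e setT by apply/forallP => v; rewrite in_setT.
exists [arg min_(D < setT | dominating e D) #|D|]; first by case: arg_minnP.
by rewrite /domination_number (bigmin_eq_arg domT) ?max_card.
Qed.

Section DominatingChoice.
Variable D : {set V}.
Hypothesis dom_D : dominating e D.

Definition dom_partner (v : V) : V :=
  odflt v [pick u | e v u && ((v \in D) || (u \in D))].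

Definition dom_choice (v : V) : {set V} :=
  if isolated e v then [set v] else [set v; dom_partner v].

Lemma dom_partnerP v :
    ~~ isolated e v ->
  e v (dom_partner v) && ((v \in D) || (dom_partner v \in D)).
Proof.
case/set0Pn => u; rewrite inE => evu.
rewrite /dom_partner; case: pickP => // no_partner.
move/forallP: dom_D => /(_ v) /orP [vD | /existsP [w /andP [wD evw]]].
  by have := no_partner u; rewrite evu vD.
by have := no_partner w; rewrite evw wD orbT.
Qed.

Lemma isolated_dominating_mem v : isolated e v -> v \in D.
Proof.
move=> /eqP iso_v; move/forallP: dom_D => /(_ v).
case/orP => [// | /existsP [u /andP [_ evu]]].
by have := in_set0 u; rewrite -iso_v inE evu.
Qed.

Lemma valid_dom_choice : irreflexive e -> valid_choice e dom_choice.
Proof.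
move=> irr_e v; rewrite /dom_choice; case iso_v: (isolated e v) => //.
have /andP [evp _] := dom_partnerP (negbT iso_v).
split; last first.
  by rewrite cards2; case: eqP => // eq_vp; rewrite -eq_vp irr_e in evp.
by apply/subsetP => x; rewrite !inE => /orP [-> // | /eqP ->]; rewrite evp orbT.
Qed.

Lemma vertex_cover_dom_choice : vertex_cover [set dom_choice v | v : V] D.
Proof.
apply/forall_inP => _ /imsetP [v _ ->]; apply/existsP; rewrite /dom_choice.
case: ifPn => [/isolated_dominating_mem vD | /dom_partnerP /andP [_]].
  by exists v; rewrite in_set1 eqxx vD.
case/orP => [vD | pD].
- by exists v; rewrite !inE eqxx vD.
- by exists (dom_partner v); rewrite !inE eqxx orbT pD.
Qed.

End DominatingChoice.

Lemma in_A_beta_le_domination_number :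
  irreflexive e -> exists2 E, in_A e E & beta E <= domination_number e.
Proof.
move=> irr_e; have [D dom_D ->] := domination_number_attained.
exists [set dom_choice D v | v : V].
  by exists (dom_choice D); split; first exact: valid_dom_choice.
rewrite /beta; apply: geq_bigmin_cond; exact: vertex_cover_dom_choice.
Qed.

End Domination.

Theorem theorem2p4 (V : finType) (e : rel V) (Emin : {set {set V}}) :
  simple_graph e ->
  in_A e Emin ->
  (forall E : {set {set V}}, in_A e E -> #|V| - alpha Emin <= #|V| - alpha E) ->
  domination_number e = #|V| - alpha Emin /\
  #|V| - alpha Emin = beta Emin.
Proof.
move=> [_ irr_e] A_Emin min_Emin; rewrite -beta_alpha; split=> //.
have [E A_E le_E] := in_A_beta_le_domination_number irr_e.
apply/eqP; rewrite eqn_leq domination_number_le_beta //=.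
by apply: leq_trans le_E; have := min_Emin E A_E; rewrite -!beta_alpha.
Qed.
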